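(* Let $N>0$. For any constant $C>0$ there exists a constant $C_0$ such that $$\prod_{j=1}^\infty\big(1+Ce^{C|\lambda|^N-\sqrt{j}/C}\big)\le C_0e^{C_0|\lambda|^{3N}}$$ holds for all $\lambda\in\mathbb{R}$. *)

From HB Require Import structures.
From mathcomp Require Import all_boot all_order all_algebra.
From mathcomp Require Import all_classical all_reals all_analysis.
Set Implicit Arguments. Unset Strict Implicit. Unset Printing Implicit Defensive.
Import Order.TTheory GRing.Theory Num.Theory.
Local Open Scope ring_scope.

(* Partial products  P_n = \prod_{j=1}^{n} u j ; the infinite product
   \prod_{j>=1} u j is the limit of P_n as n -> oo. *)
Definition partial_prod (R : realType) (u : nat -> R) (n : nat) : R :=
  \prod_(1 <= j < n.+1) u j.

Definition lemma3p1_factor (R : realType) (N C lam : R) (j : nat) : R :=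
  1 + C * expR (C * (`|lam| `^ N) - Num.sqrt (j%:R) / C).

From HB Require Import structures.
From mathcomp Require Import all_boot all_order all_algebra.
From mathcomp Require Import all_classical all_reals all_analysis.
From mathcomp Require Import ring lra zify.
Set Implicit Arguments. Unset Strict Implicit. Unset Printing Implicit Defensive.
Import Order.TTheory GRing.Theory Num.Theory numFieldNormedType.Exports.
Local Open Scope ring_scope.

(* Put a := C |lam|^N.  Every factor is at most (1 + C) e^a, and as soon as
   sqrt j >= 2 C a it is at most 1 + C e^{-sqrt j / (2C)} <= exp (C e^{-sqrt j / (2C)}).
   At most 4 C^2 a^2 factors are of the first kind, contributing
   ((1 + C) e^a)^{4 C^2 a^2} = exp (O (|lam|^{3N})); the others contribute at most
   exp (C sum_j e^{-sqrt j / (2C)}), a constant since e^{-t} <= (4/t)^4 makes the sum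
   dominated by sum_j (8C)^4 / j^2.  The partial products increase, so the bound
   passes to the limit. *)

Section Estimates.
Variable R : realType.

Lemma exprn_div_le_expR (n : nat) (t : R) : 0 <= t -> (t / n.+1%:R) ^+ n.+1 <= expR t.
Proof.
move=> t_ge0; rewrite -[t in expR t](@divfK _ n.+1%:R) ?pnatr_eq0 // expRM_natr.
set s := t / n.+1%:R; have s_ge0 : 0 <= s by rewrite divr_ge0.
apply: lerXn2r; rewrite ?nnegrE ?expR_ge0 //.
by have := expR_ge1Dx s; lra.
Qed.

Lemma expR_neg_sqrt_le (c : R) (j : nat) : 0 < c -> (0 < j)%N ->
  expR (- (Num.sqrt j%:R / c / 2)) <= (8 * c) ^+ 4 / j%:R ^+ 2.
Proof.
move=> c_gt0 j_gt0; set t := Num.sqrt (j%:R : R) / c / 2.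
have t_gt0 : 0 < t by rewrite !divr_gt0 // sqrtr_gt0 ltr0n.
have t4E : (t / 4) ^+ 4 = j%:R ^+ 2 / (8 * c) ^+ 4.
  have -> : (j%:R : R) ^+ 2 = Num.sqrt j%:R ^+ 4.
    by rewrite -[4%N]/(2 * 2)%N exprM sqr_sqrtr ?ler0n.
  rewrite /t; field; lra.
have t4_gt0 : 0 < (t / 4) ^+ 4 by apply/exprn_gt0/divr_gt0.
rewrite expRN -invf_div -t4E lef_pV2 ?posrE ?expR_gt0 //.
exact: exprn_div_le_expR (ltW t_gt0).
Qed.

Lemma sum_inv_sqr_le (n : nat) :
  \sum_(1 <= j < n.+1) (j%:R ^+ 2 : R)^-1 <= 2 - 2 / n.+1%:R.
Proof.
elim: n => [|n IH]; first by rewrite big_geq // divr1 subrr.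
rewrite big_nat_recr //=; set y : R := n.+1%:R.
have y_ge1 : 1 <= y by rewrite ler1n.
have -> : (n.+2%:R : R) = y + 1 by rewrite -natr1.
have gap_ge0 : 0 <= 2 / y - 2 / (y + 1) - (y ^+ 2)^-1.
  have -> : 2 / y - 2 / (y + 1) - (y ^+ 2)^-1 = (y - 1) / (y ^+ 2 * (y + 1)).
    by field; apply/andP; split; lra.
  by apply: divr_ge0; [lra | apply: mulr_ge0; [exact: sqr_ge0 | lra]].
move: IH gap_ge0; set S := \sum_(_ <= _ < _) _; set u := (y ^+ 2)^-1.
set v := 2 / y; set w := 2 / (y + 1); lra.
Qed.

Lemma sum_expR_neg_sqrt_le (c : R) (n : nat) : 0 < c ->
  \sum_(1 <= j < n.+1) expR (- (Num.sqrt j%:R / c / 2)) <= 2 * (8 * c) ^+ 4.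
Proof.
move=> c_gt0; have K_ge0 : 0 <= (8 * c) ^+ 4 by rewrite exprn_ge0 // mulr_ge0 ?ler0n // ltW.
apply: (le_trans (y := (8 * c) ^+ 4 * \sum_(1 <= j < n.+1) (j%:R ^+ 2 : R)^-1)).
  rewrite mulr_sumr; apply: ler_sum_nat => j /andP[j_gt0 _].
  exact: expR_neg_sqrt_le.
rewrite [leRHS]mulrC ler_wpM2l //.
by apply: le_trans (@sum_inv_sqr_le n) _; rewrite gerBl divr_ge0 ?ler0n.
Qed.

Lemma pow_truncn_le_expR (m b : R) : 1 <= m -> 0 <= b ->
  m ^+ Num.truncn b <= expR (b * ln m).
Proof.
move=> m_ge1 b_ge0; have m_gt0 : 0 < m by lra.
rewrite -{1}(lnK m_gt0) -expRM_natl ler_expR ler_wpM2r ?ln_ge0 //.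
by rewrite truncn_le.
Qed.

Lemma expR_affine_le (A B y : R) : 0 <= B -> 0 <= y ->
  expR (A + B * y) <= (expR A + B) * expR ((expR A + B) * y).
Proof.
move=> B_ge0 y_ge0; have eA_gt0 := expR_gt0 A.
rewrite expRD; apply: ler_pM; rewrite ?expR_ge0 ?ler_expR ?ler_wpM2r //; lra.
Qed.

Lemma sqr_cube_absorb (p q r x : R) : 0 <= p -> 0 <= x ->
  p * x ^+ 2 + q * x ^+ 3 + r <= (p + r) + (p + q) * x ^+ 3.
Proof.
move=> p_ge0 x_ge0.
have x2_le : x ^+ 2 <= 1 + x ^+ 3.
  have -> : 1 + x ^+ 3 = x ^+ 2 + ((x - 1) ^+ 2 * (x + 1) + x) by ring.
  by rewrite lerDl addr_ge0 // mulr_ge0 ?sqr_ge0 //; lra.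
have : p * x ^+ 2 <= p * (1 + x ^+ 3) by rewrite ler_wpM2l.
set y := x ^+ 2; set z := x ^+ 3; lra.
Qed.

End Estimates.

Section PartialProducts.
Variable R : realType.
Implicit Types (u : nat -> R) (m : R).

Lemma prod_nat_if_le m (k n : nat) :
  \prod_(1 <= j < n.+1) (if (j <= k)%N then m else 1) = m ^+ minn n k.
Proof.
elim: n => [|n IH]; first by rewrite big_geq // min0n expr0.
rewrite big_nat_recr //= IH; case: ifP => j_le.
  have -> : minn n.+1 k = (minn n k).+1 by lia.
  by rewrite exprSr.
have -> : minn n.+1 k = minn n k by lia.
by rewrite mulr1.
Qed.

Lemma partial_prod_nondecreasing u : (forall j, (0 < j)%N -> 1 <= u j) ->
  {homo partial_prod u : n m / (n <= m)%N >-> n <= m}.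
Proof.
move=> u_ge1; apply/nondecreasing_seqP => n.
rewrite /partial_prod [in leRHS]big_nat_recr //= ler_peMr ?u_ge1 //.
rewrite big_seq; apply: prodr_ge0 => j; rewrite mem_index_iota => /andP[j_gt0 _].
by have := u_ge1 j j_gt0; lra.
Qed.

Lemma partial_prod_cvgn_le u (M : R) : (forall j, (0 < j)%N -> 1 <= u j) ->
  (forall n, partial_prod u n <= M) ->
  cvgn (partial_prod u) /\ limn (partial_prod u) <= M.
Proof.
move=> u_ge1 le_M.
have cv : cvgn (partial_prod u).
  apply: nondecreasing_is_cvgn; first exact: partial_prod_nondecreasing.
  by exists M => _ [n _ <-].
by split => //; apply: limr_le => //; apply: nearW.
Qed.

End PartialProducts.

Section Factor.
Variables (R : realType) (nu C lam : R).
Hypothesis C_gt0 : 0 < C.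

Local Notation a := (C * `|lam| `^ nu).
Local Notation f := (lemma3p1_factor nu C lam).
Local Notation tail j := (expR (C * expR (- (Num.sqrt j%:R / C / 2)))).

Let Cexp_ge0 (y : R) : 0 <= C * expR y.
Proof. by rewrite mulr_ge0 ?expR_ge0 // ltW. Qed.

Let expR_a_ge1 : 1 <= expR a.
Proof. by rewrite -[leLHS]expR0 ler_expR mulr_ge0 ?powR_ge0 // ltW. Qed.

Let tail_ge1 (j : nat) : 1 <= tail j.
Proof. by rewrite -[leLHS]expR0 ler_expR Cexp_ge0. Qed.

Lemma factor_ge1 (j : nat) : 1 <= f j.
Proof. by rewrite /lemma3p1_factor lerDl Cexp_ge0. Qed.

Lemma factor_le_near (j : nat) : f j <= (1 + C) * expR a * tail j.
Proof.
have m_ge0 : 0 <= (1 + C) * expR a by rewrite mulr_ge0 ?expR_ge0 // addr_ge0 // ltW.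
rewrite /lemma3p1_factor; apply: le_trans _ (ler_peMr m_ge0 (tail_ge1 j)).
rewrite mulrDl mul1r; apply: lerD; first exact: expR_a_ge1.
by rewrite ler_pM2l // ler_expR gerBl divr_ge0 ?sqrtr_ge0 // ltW.
Qed.

Lemma factor_le_far (j : nat) : (2 * C * a) ^+ 2 <= j%:R -> f j <= tail j.
Proof.
move=> /ler_wsqrtr; rewrite sqrtr_sqr ger0_norm; last first.
  by rewrite !mulr_ge0 ?powR_ge0 // ltW.
move=> sqrt_ge.
have exp_le : expR (a - Num.sqrt j%:R / C) <= expR (- (Num.sqrt j%:R / C / 2)).
  rewrite ler_expR.
  have : 2 * a <= Num.sqrt j%:R / C by rewrite ler_pdivlMr // mulrAC.
  lra.
rewrite /lemma3p1_factor; apply: le_trans (expR_ge1Dx _).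
by rewrite lerD2l ler_pM2l.
Qed.

Lemma partial_prod_factor_le (n : nat) :
  partial_prod f n <=
  expR ((2 * C * a) ^+ 2 * (ln (1 + C) + a) + 2 * C * (8 * C) ^+ 4).
Proof.
set k := Num.truncn ((2 * C * a) ^+ 2); set m := (1 + C) * expR a.
have m_ge1 : 1 <= m.
  by rewrite /m mulrDl mul1r; have := expR_a_ge1; have := Cexp_ge0 a; lra.
have split_factors : partial_prod f n <=
    \prod_(1 <= j < n.+1) ((if (j <= k)%N then m else 1) * tail j).
  apply: ler_prod => j _; rewrite (le_trans ler01 (factor_ge1 j)) /=.
  case: leqP => [_ | k_lt_j]; first exact: factor_le_near.
  rewrite mul1r; apply: factor_le_far; apply: ltW.
  by rewrite ltNge -truncn_ge_nat ?sqr_ge0 // -ltnNge.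
have tails_le : \sum_(1 <= j < n.+1) C * expR (- (Num.sqrt j%:R / C / 2)) <=
    2 * C * (8 * C) ^+ 4.
  by rewrite -mulr_sumr -mulrA mulrCA ler_pM2l // sum_expR_neg_sqrt_le.
have m_pow_le : m ^+ minn n k <= expR ((2 * C * a) ^+ 2 * (ln (1 + C) + a)).
  have -> : ln (1 + C) + a = ln m by rewrite lnM ?expRK ?posrE ?expR_gt0 ?addr_gt0.
  apply: le_trans (ler_weXn2l m_ge1 (geq_minr n k)) _.
  by rewrite pow_truncn_le_expR ?sqr_ge0.
apply: (le_trans split_factors).
rewrite big_split /= prod_nat_if_le -expR_sum expRD.
apply: ler_pM => //; first exact: exprn_ge0 (le_trans ler01 m_ge1).
by rewrite ler_expR.
Qed.

End Factor.

Theorem lemma3p1 (R : realType) (N : R) (hN : 0 < N) (C : R) (hC : 0 < C) :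
  exists C0 : R, forall lam : R,
    cvgn (partial_prod (lemma3p1_factor N C lam)) /\
    limn (partial_prod (lemma3p1_factor N C lam))
      <= C0 * expR (C0 * (`|lam| `^ (3 * N))).
Proof.
set p := 4 * C ^+ 4 * ln (1 + C); set q := 4 * C ^+ 5; set r := 2 * C * (8 * C) ^+ 4.
have p_ge0 : 0 <= p by rewrite mulr_ge0 ?ln_ge0 ?mulr_ge0 ?exprn_ge0 ?ltW //; lra.
have q_ge0 : 0 <= q by rewrite mulr_ge0 ?exprn_ge0 ?ltW.
exists (expR (p + r) + (p + q)) => lam; set x := `|lam| `^ N.
have x_ge0 : 0 <= x by rewrite powR_ge0.
have exponent_le : (2 * C * (C * x)) ^+ 2 * (ln (1 + C) + C * x) + r <=
    (p + r) + (p + q) * x ^+ 3.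
  have -> : (2 * C * (C * x)) ^+ 2 * (ln (1 + C) + C * x) + r =
      p * x ^+ 2 + q * x ^+ 3 + r by rewrite /p /q; ring.
  exact: sqr_cube_absorb.
have bound n : partial_prod (lemma3p1_factor N C lam) n <=
    expR ((p + r) + (p + q) * x ^+ 3).
  by apply: le_trans (partial_prod_factor_le N lam hC n) _; rewrite ler_expR.
have [cv lim_le] := partial_prod_cvgn_le (fun j _ => factor_ge1 N lam hC j) bound.
have -> : `|lam| `^ (3 * N) = x ^+ 3 by rewrite mulrC powRrM powR_mulrn.
split => //; apply: le_trans lim_le _.
by apply: expR_affine_le; rewrite ?addr_ge0 ?exprn_ge0.
Qed.
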